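(* If $B^{(0)}(X,Y),\dots,B^{(\ell)}(X,Y)\in\mathbb F_q[X,Y]$ is a basis of the $\mathbb F_q[X]$-module $M_{s,\ell}$, then $G(X)^{s+1},\,B^{(0)}(X,Y)(Y-R(X)),\dots,B^{(\ell)}(X,Y)(Y-R(X))$ is a basis of $M_{s+1,\ell+1}$.
   Context: Let $\mathbb F_q$ be a finite field and $n<q$. Let $\alpha_0,\dots,\alpha_{n-1}$ be distinct nonzero elements of $\mathbb F_q$, $w_0,\dots,w_{n-1}$ nonzero elements of $\mathbb F_q$, $r\in\mathbb F_q^n$, $r_i'=r_i/w_i$, $G(X)=\prod_i(X-\alpha_i)$, and $R(X)$ the unique polynomial of degree less than $n$ with $R(\alpha_i)=r_i'$. For positive integers $s\le\ell$, $M_{s,\ell}$ is the $\mathbb F_q[X]$-module of all $Q\in\mathbb F_q[X,Y]$ of $Y$-degree at most $\ell$ such that for every $i$, $Q(X+\alpha_i,Y+r_i')$ has no monomials of total degree less than $s$. *)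

(* Bivariate polynomials in F_q[X,Y] are represented as
   {poly {poly F}}: the outer variable is Y, the coefficients are in F[X]. *)
From HB Require Import structures.
From mathcomp Require Import all_boot all_order all_algebra all_field.
Set Implicit Arguments. Unset Strict Implicit. Unset Printing Implicit Defensive.
Import Order.TTheory GRing.Theory.
Local Open Scope ring_scope.

Section Defs.
Variable F : fieldType.

Definition shift2 (a b : F) (Q : {poly {poly F}}) : {poly {poly F}} :=
  (map_poly (fun p : {poly F} => p \Po ('X + a%:P)) Q) \Po ('X + (b%:P)%:P).

Definition coef2 (Q : {poly {poly F}}) (i j : nat) : F := (Q`_j)`_i.

Definition no_low_monomials (s : nat) (Q : {poly {poly F}}) : Prop :=
  forall i j : nat, (i + j < s)%N -> coef2 Q i j = 0.

Definition inM (n : nat) (alpha r' : 'I_n -> F) (s l : nat)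
    (Q : {poly {poly F}}) : Prop :=
  (size Q <= l.+1)%N /\
  forall i : 'I_n, no_low_monomials s (shift2 (alpha i) (r' i) Q).

Definition lincomb (k : nat) (c : 'I_k -> {poly F}) (B : 'I_k -> {poly {poly F}})
  : {poly {poly F}} := \sum_(i < k) (c i)%:P * B i.

Definition is_basis (M : {poly {poly F}} -> Prop) (k : nat)
    (B : 'I_k -> {poly {poly F}}) : Prop :=
  [/\ forall i, M (B i),
      forall Q, M Q -> exists c : 'I_k -> {poly F}, Q = lincomb c B
    & forall c : 'I_k -> {poly F}, lincomb c B = 0 -> forall i, c i = 0].

Definition ext_family (k : nat) (G0 : {poly F}) (R : {poly F})
    (B : 'I_k -> {poly {poly F}}) (i : 'I_k.+1) : {poly {poly F}} :=
  if unlift ord0 i is Some j then B j * ('X - R%:P) else G0%:P.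

End Defs.

From HB Require Import structures.
From mathcomp Require Import all_boot all_order all_algebra all_field.
From mathcomp Require Import zify.
Import Order.TTheory GRing.Theory.
Local Open Scope ring_scope.

Set Implicit Arguments.
Unset Strict Implicit.
Unset Printing Implicit Defensive.

(* Write Q(X, Y) = Q(X, R) + Q1(X, Y) (Y - R).  Shifting to (alpha_i, r'_i)
   turns Y - R into Y - T_i with X | T_i, since R(alpha_i) = r'_i.  A
   polynomial P(X, Y) has no monomials of total degree < s iff X^(s - j)
   divides its j-th Y-coefficient, and this property is transported exactly
   from P to P (Y - T_i) with s raised by one.  Substituting Y = T_i into the
   shift of Q then shows that Q(X, R) vanishes to order s + 1 at every
   alpha_i, i.e. G^(s+1) divides it, so Q1 (Y - R) and hence Q1 lie in the
   smaller module.  Independence follows by substituting Y = R. *)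

Section BivariatePolynomials.
Variable F : fieldType.
Implicit Types (a b : F) (p q c T : {poly F}) (P Q : {poly {poly F}}).

Lemma dvdp_XnP k p : reflect (forall i, (i < k)%N -> p`_i = 0) ('X^k %| p).
Proof.
apply: (iffP idP) => [/dvdpP [q ->] i ltik | p_lowP].
  by rewrite coefMXn ltik.
apply/dvdpP; exists (\poly_(i < size p) p`_(i + k)); apply/polyP => i.
rewrite coefMXn; case: ltnP => [/p_lowP -> // | leki].
rewrite coef_poly subnK //; case: ltnP => // le_p_ik.
by rewrite nth_default // (leq_trans le_p_ik) ?leq_subr.
Qed.

(* For j >= s the truncated subtraction makes the condition on P`_j void. *)
Lemma no_low_monomialsP s P :
  no_low_monomials s P <-> forall j, 'X^(s - j) %| P`_j.
Proof.
split=> [P_low j | P_dvd i j ltijs].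
  by apply/dvdp_XnP => i ?; apply: P_low; lia.
by move/dvdp_XnP: (P_dvd j); apply; lia.
Qed.

Lemma no_low_monomialsB s P Q :
  no_low_monomials s P -> no_low_monomials s Q -> no_low_monomials s (P - Q).
Proof.
move=> /no_low_monomialsP P_low /no_low_monomialsP Q_low.
by apply/no_low_monomialsP => j; rewrite coefB dvdp_sub.
Qed.

Lemma no_low_monomialsMC s c P :
  no_low_monomials s P -> no_low_monomials s (c%:P * P).
Proof.
move/no_low_monomialsP => P_low.
by apply/no_low_monomialsP => j; rewrite coefCM dvdp_mull.
Qed.

Lemma no_low_monomials_polyC s c : 'X^s %| c -> no_low_monomials s c%:P.
Proof.
move=> dvd_c; apply/no_low_monomialsP => j; rewrite coefC.
by case: eqP => [-> | _]; rewrite ?subn0 ?dvdp0.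
Qed.

Section MulYsubC.
Variable T : {poly F}.
Hypothesis X_dvd_T : 'X %| T.

Let coef_mulYsubC P j :
  (P * ('X - T%:P))`_j = (if j == 0%N then 0 else P`_j.-1) - P`_j * T.
Proof. by rewrite mulrBr coefB coefMX coefMC. Qed.

Lemma no_low_monomials_mulYsubC s P :
  no_low_monomials s P -> no_low_monomials s.+1 (P * ('X - T%:P)).
Proof.
move/no_low_monomialsP => P_low; apply/no_low_monomialsP => j.
rewrite coef_mulYsubC; apply: dvdp_sub.
  by case: j => [|j] /=; rewrite ?dvdp0 ?subSS.
have [lejs | ltsj] := leqP j s.
  by rewrite (_ : s.+1 - j = (s - j) + 1)%N ?exprD ?dvdp_mul //; lia.
by rewrite (_ : s.+1 - j = 0)%N ?dvd1p //; lia.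
Qed.

(* Downward induction on s - j: the (j+1)-th coefficient of P (Y - T) is
   P`_j - P`_(j+1) T, and the factor X | T raises the divisibility already
   known for P`_(j+1) by one. *)
Lemma no_low_monomials_divYsubC s P :
  no_low_monomials s.+1 (P * ('X - T%:P)) -> no_low_monomials s P.
Proof.
move/no_low_monomialsP => PT_low; apply/no_low_monomialsP.
suff P_dvd k j : (s - j <= k)%N -> 'X^(s - j) %| P`_j.
  by move=> j; apply: (P_dvd (s - j)%N).
elim: k j => [|k IHk] j le_sj_k.
  by rewrite (_ : s - j = 0)%N ?dvd1p //; lia.
have [le_sj_k' | lt_k_sj] := leqP (s - j) k; first exact: IHk.
have dvd_next := IHk j.+1 ltac:(lia).
have := PT_low j.+1.
rewrite coef_mulYsubC /= (_ : s.+1 - j.+1 = s - j)%N // => dvd_diff.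
rewrite -(subrK (P`_j.+1 * T) P`_j) dvdp_add //.
by rewrite (_ : s - j = (s - j.+1) + 1)%N ?exprD ?dvdp_mul //; lia.
Qed.

Lemma no_low_monomials_horner s P :
  no_low_monomials s P -> 'X^s %| P.[T].
Proof.
move/no_low_monomialsP => P_low; rewrite horner_coef.
apply: (big_ind (fun q => 'X^s %| q)) => [|p q|j _]; first exact: dvdp0.
  exact: dvdp_add.
apply: dvdp_trans (dvdp_mul (P_low j) (dvdp_exp2r j X_dvd_T)).
by rewrite -exprD dvdp_exp2l //; lia.
Qed.

End MulYsubC.

Lemma shift2E a b P :
  shift2 a b P =
    comp_poly ('X + (b%:P)%:P) (map_poly (comp_poly ('X + a%:P)) P).
Proof. by []. Qed.

Lemma shift2B a b P Q : shift2 a b (P - Q) = shift2 a b P - shift2 a b Q.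
Proof. by rewrite !shift2E !rmorphB. Qed.

Lemma shift2M a b P Q : shift2 a b (P * Q) = shift2 a b P * shift2 a b Q.
Proof. by rewrite !shift2E !rmorphM. Qed.

Lemma shift2C a b c : shift2 a b c%:P = (c \Po ('X + a%:P))%:P.
Proof. by rewrite shift2E map_polyC comp_polyC. Qed.

Lemma shift2X a b : shift2 a b 'X = 'X + (b%:P)%:P.
Proof. by rewrite shift2E map_polyX comp_polyX. Qed.

Lemma shift2_horner a b P T :
  (shift2 a b P).[T \Po ('X + a%:P) - b%:P] = P.[T] \Po ('X + a%:P).
Proof. by rewrite shift2E horner_comp !hornerE subrK horner_map. Qed.

Lemma dvdp_Xn_comp_XaddC k a c :
  ('X^k %| c \Po ('X + a%:P)) = (('X - a%:P) ^+ k %| c).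
Proof.
apply/idP/idP => [/(dvdp_comp_poly ('X - a%:P))|/(dvdp_comp_poly ('X + a%:P))].
  by rewrite comp_polyXaddC_K comp_Xn_poly.
by rewrite rmorphXn /= comp_polyB comp_polyX comp_polyC addrK.
Qed.

Lemma dvdp_prod_XsubC_exp (I : finType) (x : I -> F) k c :
  injective x -> (forall i, ('X - (x i)%:P) ^+ k %| c) ->
  (\prod_i ('X - (x i)%:P)) ^+ k %| c.
Proof.
move=> x_inj dvd_c.
rewrite -prodrXl -(big_map x xpredT (fun y => ('X - y%:P) ^+ k)).
have : uniq (map x (index_enum I)) by rewrite map_inj_uniq ?index_enum_uniq.
have : all (fun y => ('X - y%:P) ^+ k %| c) (map x (index_enum I)).
  by apply/allP => _ /mapP [i _ ->].
elim: (map x _) => [|y ys IHys] /=; first by rewrite big_nil dvd1p.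
case/andP=> dvd_y dvd_ys /andP [y_notin_ys uniq_ys].
rewrite big_cons Gauss_dvdp ?dvd_y ?IHys //.
apply: coprimep_expl; rewrite coprimep_sym coprimep_XsubC.
rewrite /root horner_prod prodf_seq_neq0; apply/allP => z z_in_ys /=.
rewrite horner_exp hornerXsubC expf_neq0 // subr_eq0.
by apply: contraNneq y_notin_ys => ->.
Qed.

Lemma lincomb_ext_family k G0 R (B : 'I_k -> {poly {poly F}})
    (u : 'I_k.+1 -> {poly F}) :
  lincomb u (ext_family G0 R B) =
    (u ord0 * G0)%:P + lincomb (fun j => u (lift ord0 j)) B * ('X - R%:P).
Proof.
rewrite /lincomb big_ord_recl /ext_family unlift_none polyCM; congr (_ + _).
by rewrite mulr_suml; apply: eq_bigr => j _; rewrite liftK mulrA.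
Qed.

Lemma ext_family_free k G0 R (B : 'I_k -> {poly {poly F}}) :
  G0 != 0 -> (forall u, lincomb u B = 0 -> forall j, u j = 0) ->
  forall u, lincomb u (ext_family G0 R B) = 0 -> forall i, u i = 0.
Proof.
move=> G0_neq0 B_free u; rewrite lincomb_ext_family => u_rel.
have u0_eq0 : u ord0 = 0.
  move: (congr1 (horner^~ R) u_rel); rewrite !hornerE subrr mulr0 addr0 => /eqP.
  by rewrite mulf_eq0 (negPf G0_neq0) orbF => /eqP.
move: u_rel; rewrite u0_eq0 mul0r add0r => /eqP.
rewrite mulf_eq0 (negPf (monic_neq0 (monicXsubC _))) orbF.
move=> /eqP/B_free u_eq0 i.
by case: (unliftP ord0 i) => [j -> | ->].
Qed.

End BivariatePolynomials.

Section InterpolationModule.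
Variables (F : fieldType) (n : nat) (alpha r' : 'I_n -> F) (R : {poly F}).
Hypothesis alpha_inj : injective alpha.
Hypothesis R_interp : forall i, R.[alpha i] = r' i.

Let G := \prod_(i < n) ('X - (alpha i)%:P).
Let T i := R \Po ('X + (alpha i)%:P) - (r' i)%:P.
Local Notation M := (inM alpha r').

Lemma X_dvd_shift_interp i : 'X %| T i.
Proof.
rewrite -[X in X %| _]subr0 dvdp_XsubCl /root /T.
by rewrite !hornerE horner_comp !hornerE R_interp subrr.
Qed.

Lemma shift2_YsubR i : shift2 (alpha i) (r' i) ('X - R%:P) = 'X - (T i)%:P.
Proof. by rewrite shift2B shift2X shift2C /T polyCB opprB addrA. Qed.

Lemma inMB s l P Q : M s l P -> M s l Q -> M s l (P - Q).
Proof.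
move=> [size_P P_low] [size_Q Q_low]; split=> [|i].
  by rewrite (leq_trans (size_polyD _ _)) // size_polyN geq_max size_P.
by rewrite shift2B; apply: no_low_monomialsB.
Qed.

Lemma inMMC s l c P : M s l P -> M s l (c%:P * P).
Proof.
move=> [size_P P_low]; split=> [|i].
  by rewrite mul_polyC (leq_trans (size_scale_leq _ _)).
by rewrite shift2M shift2C; apply: no_low_monomialsMC.
Qed.

Lemma inM_polyC_Gexp s l : M s l (G ^+ s)%:P.
Proof.
split=> [|i]; first exact: leq_trans (size_polyC_leq1 _) _.
rewrite shift2C; apply: no_low_monomials_polyC.
by rewrite dvdp_Xn_comp_XaddC dvdp_exp2r // /G (bigD1 i) //= dvdp_mulr.
Qed.

Lemma inM_mulYsubR s l P : M s.+1 l.+1 (P * ('X - R%:P)) <-> M s l P.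
Proof.
have size_PYR : (size (P * ('X - R%:P))%R <= l.+2)%N = (size P <= l.+1)%N.
  have [-> | P_neq0] := eqVneq P 0; first by rewrite mul0r size_poly0.
  by rewrite size_Mmonic ?monicXsubC // size_XsubC addn2.
rewrite /inM size_PYR.
split=> -[size_P P_low]; split=> // i; move: (P_low i).
  by rewrite shift2M shift2_YsubR; apply/no_low_monomials_divYsubC/X_dvd_shift_interp.
by rewrite shift2M shift2_YsubR; apply/no_low_monomials_mulYsubC/X_dvd_shift_interp.
Qed.

Lemma Gexp_dvd_horner_interp s l Q : M s l Q -> G ^+ s %| Q.[R].
Proof.
move=> [_ Q_low]; apply: dvdp_prod_XsubC_exp alpha_inj _ => i.
rewrite -dvdp_Xn_comp_XaddC -(@shift2_horner _ _ (r' i)) -/(T i).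
exact: no_low_monomials_horner (X_dvd_shift_interp i) _ _ (Q_low i).
Qed.

Lemma inM_decompose s l Q : M s.+1 l.+1 Q ->
  exists Q1 c, Q = Q1 * ('X - R%:P) + (c * G ^+ s.+1)%:P /\ M s l Q1.
Proof.
move=> Q_in; have QR_eq := esym (divpK (Gexp_dvd_horner_interp Q_in)).
have /factor_theorem [Q1 Q1_eq] : root (Q - Q.[R]%:P) R.
  by rewrite /root !hornerE subrr.
exists Q1, (Q.[R] %/ G ^+ s.+1); split; first by rewrite -QR_eq -Q1_eq subrK.
apply/inM_mulYsubR; rewrite -Q1_eq; apply: inMB => //.
by rewrite QR_eq polyCM; apply/inMMC/inM_polyC_Gexp.
Qed.

End InterpolationModule.

Theorem lemma9 (F : finFieldType) (n : nat) (hnq : (n < #|F|)%N)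
  (alpha w r : 'I_n -> F)
  (halpha_inj : injective alpha)
  (halpha_nz : forall i, alpha i != 0)
  (hw_nz : forall i, w i != 0)
  (R : {poly F})
  (hR_size : (size R <= n)%N)
  (hR_interp : forall i, R.[alpha i] = r i / w i)
  (s l : nat) (hs : (0 < s)%N) (hsl : (s <= l)%N)
  (B : 'I_l.+1 -> {poly {poly F}}) :
  let r' := fun i => r i / w i in
  let G := \prod_(i < n) ('X - (alpha i)%:P) in
  is_basis (inM alpha r' s l) B ->
  is_basis (inM alpha r' s.+1 l.+1) (ext_family (G ^+ s.+1) R B).
Proof.
move=> r' G [B_in B_span B_free]; split.
- move=> i; rewrite /ext_family.
  case: unlift => [j|]; last exact: inM_polyC_Gexp.
  exact/(inM_mulYsubR hR_interp)/B_in.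
- move=> Q /(inM_decompose halpha_inj hR_interp) [Q1 [c [-> /B_span [u ->]]]].
  exists (fun i => if unlift ord0 i is Some j then u j else c).
  rewrite lincomb_ext_family unlift_none addrC; congr (_ + _ * _).
  by apply: eq_bigr => j _; rewrite liftK.
- apply: ext_family_free B_free.
  by rewrite expf_neq0 // monic_neq0 // monic_prod_XsubC.
Qed.
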